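(* Let $n>2$ be an even integer and let $\Phi^{(n,n/2)}:M_n\to M_n$ be defined by $\Phi^{(n,n/2)}([a_{ij}])=\operatorname{diag}(b_1,\dots,b_n)-[a_{ij}]$ with $b_i=(n-1)a_{ii}+a_{\sigma(i),\sigma(i)}$, where $\sigma(i)\equiv i+n/2\pmod n$, $\sigma(i)\in\{1,\dots,n\}$. Then $\Phi^{(n,n/2)}$ is a decomposable positive linear map.
   Context: A linear map $\phi:M_n\to M_n$ is decomposable if $\phi=\phi_1+\phi_2$ where $\phi_1$ is completely positive and $\phi_2$ is completely copositive (i.e. $\phi_2$ composed with the transpose map is completely positive). *)

(* Matrices over an arbitrary numeric algebraically closed
   field C (e.g. the complex numbers); matrix indices are 0-based. *)
From HB Require Import structures.
From mathcomp Require Import all_boot all_order all_algebra.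
Set Implicit Arguments. Unset Strict Implicit. Unset Printing Implicit Defensive.
Import Order.TTheory GRing.Theory Num.Theory.
Local Open Scope ring_scope.

Section Defs.
Variable C : numClosedFieldType.

Definition form n (x : 'cV[C]_n) (A : 'M[C]_n) (y : 'cV[C]_n) : C :=
  ((map_mx Num.conj x)^T *m A *m y) 0 0.

(* positive semidefinite: x^* A x >= 0 (in particular real) for all x *)
Definition psd n (A : 'M[C]_n) : Prop := forall x : 'cV[C]_n, 0 <= form x A x.

(* A k x k block matrix with n x n blocks B i j, i.e. an element of
   M_k (M_n) = M_(kn), is positive semidefinite; this is psd of the block
   matrix written out with block vectors x = (x_0, ..., x_(k-1)). *)
Definition block_psd k n (B : 'I_k -> 'I_k -> 'M[C]_n) : Prop :=
  forall x : 'I_k -> 'cV[C]_n, 0 <= \sum_(i < k) \sum_(j < k) form (x i) (B i j) (x j).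

Definition linear_map n (phi : 'M[C]_n -> 'M[C]_n) : Prop :=
  forall (a : C) (A B : 'M[C]_n), phi (a *: A + B) = a *: phi A + phi B.

Definition positive_map n (phi : 'M[C]_n -> 'M[C]_n) : Prop :=
  forall A : 'M[C]_n, psd A -> psd (phi A).

(* completely positive: id_k (x) phi is positive for every k *)
Definition completely_positive n (phi : 'M[C]_n -> 'M[C]_n) : Prop :=
  forall (k : nat) (B : 'I_k -> 'I_k -> 'M[C]_n),
    block_psd B -> block_psd (fun i j => phi (B i j)).

Definition completely_copositive n (phi : 'M[C]_n -> 'M[C]_n) : Prop :=
  completely_positive (fun A => phi A^T).

Definition decomposable n (phi : 'M[C]_n -> 'M[C]_n) : Prop :=
  exists phi1 phi2 : 'M[C]_n -> 'M[C]_n,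
    [/\ linear_map phi1, linear_map phi2,
        completely_positive phi1, completely_copositive phi2 &
        forall A, phi A = phi1 A + phi2 A].

Definition sigma n (i : 'I_n) : 'I_n :=
  Ordinal (ltn_pmod (i + n %/ 2) (leq_ltn_trans (leq0n i) (ltn_ord i))).

Definition PhiN n (A : 'M[C]_n) : 'M[C]_n :=
  \matrix_(i, j) ((i == j)%:R * ((n - 1)%:R * A i i + A (sigma i) (sigma i)) - A i j).

End Defs.

(* Phi^(n,n/2) is a sum of two maps given explicitly in Kraus form.  With
   e_a the standard basis and s := sigma, an involution,
     phi1(A) = M o A, the Schur product with
       M = 1/2 sum_{b <> s a} (e_a - e_b)(e_a - e_b)^* = (n-1) I - J + P_s,
     phi2(A^T) = 1/2 sum_a W_a A W_a^*,  W_a = e_a e_(s a)^T - e_(s a) e_a^T.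
   Both are completely positive, so Phi is decomposable, hence positive. *)
From HB Require Import structures.
From mathcomp Require Import all_boot all_order all_algebra.
From mathcomp Require Import ring.
Set Implicit Arguments. Unset Strict Implicit. Unset Printing Implicit Defensive.
Import Order.TTheory GRing.Theory Num.Theory.
Local Open Scope ring_scope.

Section DeltaSums.
Variables (R : comPzRingType) (I : finType).

Lemma sum_deltal (x : I) (F : I -> R) : \sum_k (x == k)%:R * F k = F x.
Proof.
rewrite (bigD1 x) //= eqxx mul1r big1 ?addr0 // => k /negbTE.
by rewrite eq_sym => ->; rewrite mul0r.
Qed.

Lemma sum_delta_scalel (x : I) (c : R) (F : I -> R) :
  \sum_k (c * (k == x)%:R) * F k = c * F x.
Proof.
rewrite -(sum_deltal x) mulr_sumr; apply: eq_bigr => k _.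
by rewrite eq_sym; ring.
Qed.

Lemma sum_delta_scaler (x : I) (c : R) (F : I -> R) :
  \sum_k F k * (c * (k == x)%:R) = c * F x.
Proof.
by rewrite -sum_delta_scalel; apply: eq_bigr => k _; rewrite mulrC.
Qed.

Lemma sum_delta1 (x : I) : \sum_k ((x == k)%:R : R) = 1.
Proof.
by rewrite -[RHS](sum_deltal x (fun _ => 1)); apply: eq_bigr => k _; rewrite mulr1.
Qed.

Lemma sum_sqr_diff (F G : I -> R) :
  \sum_a \sum_b (F a - F b) * (G a - G b) =
  2 * (#|I|%:R * \sum_a F a * G a - (\sum_a F a) * (\sum_a G a)).
Proof.
transitivity (\sum_a \sum_b ((F a * G a + F b * G b) - (F a * G b + G a * F b))).
  by apply: eq_bigr => a _; apply: eq_bigr => b _; ring.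
under eq_bigr do rewrite sumrB big_split /= -mulr_sumr big_split /= -mulr_sumr
  -mulr_sumr sumr_const.
rewrite sumrB !big_split /= -!mulr_suml sumr_const.
under eq_bigr do rewrite mulrnAr -mulr_natr.
rewrite -mulr_suml; ring.
Qed.

End DeltaSums.

Section CompletePositivity.
Variable C : numClosedFieldType.

Definition ctrmx m p (M : 'M[C]_(m, p)) : 'M[C]_(p, m) := (map_mx Num.conj M)^T.

Lemma form_ctrmx n (x y : 'cV[C]_n) (V A : 'M[C]_n) :
  form x (V *m A *m ctrmx V) y = form (ctrmx V *m x) A (ctrmx V *m y).
Proof.
rewrite /form /ctrmx map_mxM.
have -> : map_mx Num.conj (map_mx Num.conj V)^T = V^T.
  by apply/matrixP => i j; rewrite !mxE conjCK.
by rewrite trmx_mul trmxK !mulmxA.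
Qed.

Lemma form_suml n (T : finType) (c : T -> C) (M : T -> 'M[C]_n) x y :
  form x (\sum_t c t *: M t) y = \sum_t c t * form x (M t) y.
Proof.
rewrite /form mulmx_sumr mulmx_suml summxE; apply: eq_bigr => t _.
by rewrite -scalemxAr -scalemxAl mxE.
Qed.

Lemma formDl n x (A B : 'M[C]_n) y : form x (A + B) y = form x A y + form x B y.
Proof. by rewrite /form mulmxDr mulmxDl mxE. Qed.

Lemma psd_trmx n (A : 'M[C]_n) : psd A -> psd A^T.
Proof.
move=> psdA x.
suff -> : form x A^T x = form (map_mx Num.conj x) A (map_mx Num.conj x) by apply: psdA.
rewrite /form; set M := (_ *m _ *m _).
transitivity (M^T 0 0); first by rewrite [in RHS]mxE.
rewrite /M !trmx_mul !trmxK mulmxA; congr ((_ *m _ *m _) _ _).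
by apply/matrixP => i j; rewrite !mxE conjCK.
Qed.

Lemma kraus_completely_positive n (T : finType) (c : T -> C) (V : T -> 'M[C]_n)
    (phi : 'M[C]_n -> 'M[C]_n) :
  (forall t, 0 <= c t) ->
  (forall A, phi A = \sum_t c t *: (V t *m A *m ctrmx (V t))) ->
  completely_positive phi.
Proof.
move=> c_ge0 phiE k B psdB x.
have -> : \sum_(i < k) \sum_(j < k) form (x i) (phi (B i j)) (x j) =
  \sum_t c t * \sum_(i < k) \sum_(j < k)
      form (ctrmx (V t) *m x i) (B i j) (ctrmx (V t) *m x j).
  under eq_bigr => i _ do under eq_bigr => j _ do
    [rewrite phiE form_suml; under eq_bigr => t _ do rewrite form_ctrmx].
  under eq_bigr => i _ do rewrite exchange_big.
  rewrite exchange_big; apply: eq_bigr => t _.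
  by rewrite mulr_sumr; apply: eq_bigr => i _; rewrite mulr_sumr.
by apply: sumr_ge0 => t _; apply: mulr_ge0 => //; apply: psdB.
Qed.

Lemma completely_positive_positive n (phi : 'M[C]_n -> 'M[C]_n) :
  completely_positive phi -> positive_map phi.
Proof.
move=> cp_phi A psdA x.
have := cp_phi 1%N (fun _ _ => A) _ (fun _ => x); rewrite !big_ord1; apply.
by move=> y; rewrite !big_ord1; apply: psdA.
Qed.

Lemma completely_copositive_positive n (phi : 'M[C]_n -> 'M[C]_n) :
  completely_copositive phi -> positive_map phi.
Proof.
move=> /completely_positive_positive ccp_phi A /psd_trmx psdAT.
by have := ccp_phi _ psdAT; rewrite trmxK.
Qed.

Lemma decomposable_positive n (phi : 'M[C]_n -> 'M[C]_n) :
  decomposable phi -> positive_map phi.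
Proof.
case=> phi1 [phi2 [_ _ /completely_positive_positive pos1
  /completely_copositive_positive pos2 phiE]] A psdA x.
by rewrite phiE formDl addr_ge0 ?pos1 ?pos2.
Qed.

Lemma schur_completely_positive n (T : finType) (c : T -> C) (v : T -> 'I_n -> C) :
  (forall t, 0 <= c t) ->
  completely_positive
    (map2_mx *%R (\matrix_(i, j) \sum_t c t * (v t i * (v t j)^*))).
Proof.
move=> c_ge0; apply: (kraus_completely_positive (V := fun t => diag_mx (\row_k v t k)) c_ge0).
move=> A; apply/matrixP => i j; rewrite summxE !mxE mulr_suml; apply: eq_bigr => t _.
rewrite /ctrmx map_diag_mx tr_diag_mx mul_diag_mx mul_mx_diag !mxE; ring.
Qed.

End CompletePositivity.

Section Involution.
Variables (C : numClosedFieldType) (n : nat) (s : 'I_n -> 'I_n).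
Hypothesis sK : involutive s.

Local Notation d x y := ((x == y)%:R : C).

Lemma eq_involutive i j : (i == s j) = (s i == j).
Proof. by apply/eqP/eqP => [->|<-]; rewrite sK. Qed.

(* [PhiN] is [PhiInvol sigma] by definition. *)
Definition PhiInvol (A : 'M[C]_n) : 'M[C]_n :=
  \matrix_(i, j) ((i == j)%:R * ((n - 1)%:R * A i i + A (s i) (s i)) - A i j).

Definition edge_vec (t : 'I_n * 'I_n) (k : 'I_n) : C := d k t.1 - d k t.2.
Definition edge_weight (t : 'I_n * 'I_n) : C := (1 - d t.2 (s t.1)) / 2.

Lemma edge_weight_ge0 t : 0 <= edge_weight t.
Proof.
rewrite /edge_weight; case: eqP => _; first by rewrite subrr mul0r.
by rewrite subr0 mul1r invr_ge0 ler0n.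
Qed.

Lemma conj_edge_vec t k : (edge_vec t k)^* = edge_vec t k.
Proof. by rewrite rmorphB /= !conjC_nat. Qed.

Lemma edge_gram i j :
  \sum_t edge_weight t * (edge_vec t i * edge_vec t j) =
  d i j * (n - 1)%:R - 1 + d j (s i).
Proof.
rewrite -(pair_bigA _ (fun a b =>
  edge_weight (a, b) * (edge_vec (a, b) i * edge_vec (a, b) j))).
rewrite /edge_weight /edge_vec /=.
transitivity ((\sum_a \sum_b (d i a - d i b) * (d j a - d j b)
   - \sum_a \sum_b d b (s a) * ((d i a - d i b) * (d j a - d j b))) / 2).
  rewrite -sumrB mulr_suml; apply: eq_bigr => a _.
  rewrite -sumrB mulr_suml; apply: eq_bigr => b _.
  rewrite ![(_ == a)]eq_sym ![(_ == b)]eq_sym; ring.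
have -> : \sum_a \sum_b d b (s a) * ((d i a - d i b) * (d j a - d j b))
   = \sum_a (d i a - d i (s a)) * (d j a - d j (s a)).
  apply: eq_bigr => a _; under eq_bigr => b _ do rewrite (eq_sym b).
  exact: (sum_deltal (s a) (fun b => (d i a - d i b) * (d j a - d j b))).
rewrite sum_sqr_diff card_ord !sum_deltal !sum_delta1.
under eq_bigr => a _ do rewrite !eq_involutive mulrBl !mulrBr.
rewrite !sumrB !sum_deltal (eq_sym (s j) i) eq_involutive (eq_sym (s i) j).
rewrite (inj_eq (can_inj sK)) natrB ?(leq_ltn_trans (leq0n i) (ltn_ord i)) //.
by rewrite (eq_sym i j); field.
Qed.

Definition schur_part : 'M[C]_n -> 'M[C]_n :=
  map2_mx *%R (\matrix_(i, j) \sum_t edge_weight t * (edge_vec t i * (edge_vec t j)^*)).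

Lemma schur_partE A i j :
  schur_part A i j = (d i j * (n - 1)%:R - 1 + d j (s i)) * A i j.
Proof.
rewrite !mxE -edge_gram; congr (_ * _); apply: eq_bigr => t _.
by rewrite conj_edge_vec.
Qed.

Definition swap_part (A : 'M[C]_n) : 'M[C]_n :=
  \matrix_(i, j) (d i j * A (s i) (s i) - d j (s i) * A i j).

Definition swap_kraus (a : 'I_n) : 'M[C]_n :=
  \matrix_(i, k) (d i a * d k (s a) - d i (s a) * d k a).

Lemma swap_krausE A a i j : (swap_kraus a *m A *m ctrmx (swap_kraus a)) i j =
  d i a * d j a * A (s a) (s a) - d i a * d j (s a) * A (s a) a
  - d i (s a) * d j a * A a (s a) + d i (s a) * d j (s a) * A a a.
Proof.
rewrite !mxE.
under eq_bigr => l _ do rewrite !mxE rmorphB !rmorphM /= !conjC_nat.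
under eq_bigr => l _ do under eq_bigr => k _ do rewrite !mxE mulrBl.
under eq_bigr => l _ do rewrite sumrB !sum_delta_scalel mulrBr.
by rewrite sumrB !sum_delta_scaler; ring.
Qed.

Lemma swap_part_completely_copositive : completely_copositive swap_part.
Proof.
apply: (kraus_completely_positive (c := fun _ => 1 / 2) (V := swap_kraus)) => [a|A].
  by rewrite mul1r invr_ge0 ler0n.
apply/matrixP => i j; rewrite summxE !mxE.
under eq_bigr => a _ do
  rewrite mxE swap_krausE !eq_involutive -![_ * _ * A _ _]mulrA mul1r.
rewrite -mulr_sumr !big_split /= !sumrN !sum_deltal sK (inj_eq (can_inj sK)).
rewrite -(eq_involutive j i) (eq_sym j i).
by case: (j =P s i) => [->|_]; rewrite ?mul0r; field.
Qed.

Lemma PhiInvol_split A : PhiInvol A = schur_part A + swap_part A.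
Proof.
apply/matrixP => i j; rewrite [RHS]mxE schur_partE !mxE.
by move: ((n - 1)%:R : C) => m; case: eqP => [<-|_] /=; ring.
Qed.

Lemma PhiInvol_decomposable : decomposable PhiInvol.
Proof.
exists schur_part, swap_part; split.
- by move=> a A B; apply/matrixP => i j; rewrite !mxE; ring.
- by move=> a A B; apply/matrixP => i j; rewrite !mxE; ring.
- exact/schur_completely_positive/edge_weight_ge0.
- exact: swap_part_completely_copositive.
- exact: PhiInvol_split.
Qed.

End Involution.

Lemma sigma_involutive n : ~~ odd n -> involutive (@sigma n).
Proof.
move=> n_even i; apply: val_inj => /=.
have halves : (n %/ 2 + n %/ 2 = n)%N.
  by rewrite addnn -muln2 divnK // dvdn2.
by rewrite modnDml -addnA halves modnDr modn_small.
Qed.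

Lemma PhiN_linear (C : numClosedFieldType) n : linear_map (@PhiN C n).
Proof. by move=> a A B; apply/matrixP => i j; rewrite !mxE; ring. Qed.

Theorem corollary3 (C : numClosedFieldType) (n : nat) :
  (2 < n)%N -> ~~ odd n ->
  linear_map (@PhiN C n) /\ positive_map (@PhiN C n) /\ decomposable (@PhiN C n).
Proof.
move=> _ /sigma_involutive/(PhiInvol_decomposable C) decPhi.
split; first exact: PhiN_linear.
by split; [exact: decomposable_positive | exact decPhi].
Qed.
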